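(* Consider a symmetric two-player game with pure strategy set $I=\{1,\dots,N\}$ and payoff matrix $\mathbf{U}=(u_{ij})$. Let $I'\subset I$. For $\mathbf{x}\in S_N$ define $\mathbf{x}'\in\mathbb{R}_+^N$ by $x'_i=x_i$ if $i\in I'$ and $x'_i=0$ otherwise, and let $x(I')=\sum_{i\in I'}x_i$; define $\mathbf{y}'$, $y(I')$ similarly. Let $(\mathbf{x},\mathbf{y})$ be a Nash equilibrium with $x(I')\,y(I')>0$, and assume that for all $i,j\in I'$, $$[\mathbf{U}(\mathbf{y}-\mathbf{y}')]_i=[\mathbf{U}(\mathbf{y}-\mathbf{y}')]_j\quad\text{and}\quad[\mathbf{U}(\mathbf{x}-\mathbf{x}')]_i=[\mathbf{U}(\mathbf{x}-\mathbf{x}')]_j.$$ Then for all $i,j\in I'$: if $x'_i>0$ then $(\mathbf{U}\mathbf{y}')_i\ge(\mathbf{U}\mathbf{y}')_j$, and if $y'_i>0$ then $(\mathbf{U}\mathbf{x}')_i\ge(\mathbf{U}\mathbf{x}')_j$.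
   Context: $S_N=\{\mathbf{x}\in\mathbb{R}_+^N:\sum_i x_i=1\}$. In the symmetric game, for the mixed profile $(\mathbf{x},\mathbf{y})$ the row player gets $\mathbf{x}\cdot\mathbf{U}\mathbf{y}$ and the column player gets $\mathbf{y}\cdot\mathbf{U}\mathbf{x}$; a Nash equilibrium is a pair of mutual best replies. *)

From mathcomp Require Import all_boot all_order all_algebra.
Set Implicit Arguments. Unset Strict Implicit. Unset Printing Implicit Defensive.
Import Order.TTheory GRing.Theory Num.Theory.
Local Open Scope ring_scope.

Definition dotv (R : ringType) (N : nat) (a b : 'cV[R]_N) : R :=
  \sum_(i < N) a i 0 * b i 0.

Definition simplex (R : realFieldType) (N : nat) (x : 'cV[R]_N) : Prop :=
  (forall i, 0 <= x i 0) /\ \sum_(i < N) x i 0 = 1.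

Definition nash_eq (R : realFieldType) (N : nat) (U : 'M[R]_N)
    (x y : 'cV[R]_N) : Prop :=
  simplex x /\ simplex y /\
  (forall z, simplex z -> dotv z (U *m y) <= dotv x (U *m y)) /\
  (forall z, simplex z -> dotv z (U *m x) <= dotv y (U *m x)).

Definition restr (R : ringType) (N : nat) (I' : {set 'I_N}) (x : 'cV[R]_N)
  : 'cV[R]_N := \col_i (if i \in I' then x i 0 else 0).

Definition mass (R : ringType) (N : nat) (I' : {set 'I_N}) (x : 'cV[R]_N) : R :=
  \sum_(i in I') x i 0.

From mathcomp Require Import all_boot all_order all_algebra.

Set Implicit Arguments.
Unset Strict Implicit.
Unset Printing Implicit Defensive.
Import Order.TTheory GRing.Theory Num.Theory.
Local Open Scope ring_scope.

(* A best reply puts positive weight only on pure strategies of maximal payoff: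
   otherwise shifting the weight of [i] to a better [j] raises the payoff.
   Under the hypothesis on [U (y - y')], the payoff vector [U y] differs from
   [U y'] by a constant on [I'], so maximality on [I'] transfers to [U y']. *)

Section BestReply.

Variables (R : realFieldType) (N : nat).
Implicit Types (x z v : 'cV[R]_N) (i j : 'I_N).

Lemma dotvDl z x v : dotv (z + x) v = dotv z v + dotv x v.
Proof. by rewrite /dotv -big_split; apply: eq_bigr => k _; rewrite mxE mulrDl. Qed.

Lemma dotvZl (a : R) x v : dotv (a *: x) v = a * dotv x v.
Proof. by rewrite /dotv mulr_sumr; apply: eq_bigr => k _; rewrite mxE mulrA. Qed.

Lemma dotvBl z x v : dotv (z - x) v = dotv z v - dotv x v.
Proof. by rewrite dotvDl -scaleN1r dotvZl mulN1r. Qed.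

Lemma dotv_deltal j v : dotv (delta_mx j 0) v = v j 0.
Proof.
rewrite /dotv (bigD1 j) //= mxE !eqxx mul1r big1 ?addr0 // => k /negbTE kj.
by rewrite mxE kj mul0r.
Qed.

Lemma sum_nat_eq1 j : \sum_(k < N) (k == j)%:R = 1 :> R.
Proof. by rewrite (bigD1 j) //= eqxx big1 ?addr0 // => k /negbTE ->. Qed.

Definition shift_weight x i j : 'cV[R]_N :=
  x + x i 0 *: (delta_mx j 0 - delta_mx i 0).

Lemma simplex_shift_weight x i j : simplex x -> simplex (shift_weight x i j).
Proof.
move=> [x_ge0 x_sum1]; split.
  move=> k; rewrite !mxE !eqxx !andbT.
  have := x_ge0 i.
  case: (eqVneq k i) => [->|_]; case: (_ == j) => /= xi_ge0.
  all: try by rewrite subrr mulr0 addr0.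
  - by rewrite sub0r mulrN1 subrr.
  - by rewrite subr0 mulr1 addr_ge0.
under eq_bigr do rewrite !mxE !eqxx !andbT.
rewrite big_split /= x_sum1 -mulr_sumr sumrB.
by rewrite !sum_nat_eq1 subrr mulr0 addr0.
Qed.

Lemma best_reply_support x v i j :
  simplex x -> (forall z, simplex z -> dotv z v <= dotv x v) ->
  0 < x i 0 -> v j 0 <= v i 0.
Proof.
move=> sx best xi_gt0.
have := best _ (simplex_shift_weight i j sx).
rewrite /shift_weight dotvDl dotvZl dotvBl !dotv_deltal gerDl.
by rewrite pmulr_rle0 // subr_le0.
Qed.

End BestReply.

Lemma ler_of_eq_diff (R : realFieldType) (N : nat) (v w : 'cV[R]_N) (i j : 'I_N) :
  (v - w) i 0 = (v - w) j 0 -> v j 0 <= v i 0 -> w j 0 <= w i 0.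
Proof. by rewrite !mxE => Evw; rewrite -(subrK w v) !mxE Evw lerD2l. Qed.

Theorem lemma4 (R : realFieldType) (N : nat) (U : 'M[R]_N)
    (I' : {set 'I_N}) (x y : 'cV[R]_N) :
  nash_eq U x y ->
  0 < mass I' x * mass I' y ->
  (forall i j, i \in I' -> j \in I' ->
     (U *m (y - restr I' y)) i 0 = (U *m (y - restr I' y)) j 0 /\
     (U *m (x - restr I' x)) i 0 = (U *m (x - restr I' x)) j 0) ->
  forall i j, i \in I' -> j \in I' ->
    (0 < restr I' x i 0 -> (U *m restr I' y) j 0 <= (U *m restr I' y) i 0) /\
    (0 < restr I' y i 0 -> (U *m restr I' x) j 0 <= (U *m restr I' x) i 0).
Proof.
move=> [sx [sy [best_x best_y]]] _ const_off i j iI jI.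
have [Ey Ex] := const_off i j iI jI.
rewrite !mulmxBr in Ey Ex.
have restr_i z : restr I' z i 0 = z i 0 by rewrite mxE iI.
rewrite !restr_i; split=> pos.
- exact: ler_of_eq_diff Ey (best_reply_support j sx best_x pos).
- exact: ler_of_eq_diff Ex (best_reply_support j sy best_y pos).
Qed.
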